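(* For each $\{\cup,\cap,\bot,\{0\},\min,\max,l,r\}$-formula $\phi(\bar{X})$ there is a $\{\cup,\cap,\bot,\{0\},\min,\max,\mathrm{ips}\}$-formula $\psi(\bar{Y})$ such that for each tuple $\bar{A}$ of finite unions of closed intervals of $I$, \[ L(I) \models \phi(\bar{A}) \Longleftrightarrow W(I) \models \psi(\overline{l(A)},\overline{r(A)}), \] where $l(A)$ and $r(A)$ denote the sets of left and right endpoints of $A$.
   Context: Let $I$ be a dense linear order with a left endpoint $0$ and no right endpoint. $W(I)$ is the structure in the signature $\{\cup,\cap,\bot,\{0\},\min,\max,\mathrm{ips}\}$ whose universe is the collection of finite subsets of $I$, with $\cup,\cap$ union and intersection, $\bot$ the empty set, the constant $\{0\}$ interpreted as the singleton of the left endpoint, $\min$ and $\max$ sending a nonempty finite set to the singleton of its minimum (resp. maximum) and fixing $\emptyset$, and $\mathrm{ips}$ the binary function $\mathrm{ips}(A,B)=\{i\in A : \text{the successor of } i \text{ in } A \text{ (in the induced order) exists and lies in } B\}$. $L(I)$ is the structure in the signature $\{\cup,\cap,\bot,\{0\},\min,\max,l,r\}$ whose universe is the collection of finite unions of closed intervals of $I$ (closed intervals being sets of the form $[i,j]$, $[i,+\infty)$, $(-\infty,j]$), with $\cup,\cap$ union and intersection, $\bot$ the empty set, $\{0\}$ the singleton of the left endpoint, $\min$ and $\max$ sending a set to the singleton of its minimum (resp. maximum), with $\min(\emptyset)=\max(\emptyset)=\emptyset$ and $\max(A)=\emptyset$ for unbounded $A$, and $l$, $r$ sending a set to the set of its left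 (resp. right) endpoints. *)

From mathcomp Require Import all_boot all_order.
Set Implicit Arguments. Unset Strict Implicit. Unset Printing Implicit Defensive.
Import Order.TTheory.
Local Open Scope order_scope.

Section Defs.
Variables (d : Order.disp_t) (T : orderType d).

Definition pset := T -> Prop.
Definition env := nat -> pset.

Definition pset0 : pset := fun _ => False.
Definition psetU (A B : pset) : pset := fun x => A x \/ B x.
Definition psetI (A B : pset) : pset := fun x => A x /\ B x.
Definition pset1 (a : T) : pset := fun x => x = a.

Definition pmin (A : pset) : pset := fun x => A x /\ forall y, A y -> x <= y.
Definition pmax (A : pset) : pset := fun x => A x /\ forall y, A y -> y <= x.

Definition lends (A : pset) : pset :=
  fun x => A x /\ ~ (exists y, y < x /\ forall w, y <= w <= x -> A w).
Definition rends (A : pset) : pset :=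
  fun x => A x /\ ~ (exists y, x < y /\ forall w, x <= w <= y -> A w).

Definition ips (A B : pset) : pset :=
  fun i => A i /\ exists j, [/\ A j, i < j, (forall k, A k -> i < k -> j <= k) & B j].

(* universe of W(I): finite subsets of I *)
Definition finite_pset (A : pset) : Prop :=
  exists s : seq T, forall x, A x <-> x \in s.

Inductive cival := CI of T & T | CRay of T | CLray of T.
Definition cival_set (J : cival) : pset :=
  match J with
  | CI i j => fun x => i <= x <= j
  | CRay i => fun x => i <= x
  | CLray j => fun x => x <= j
  end.

(* universe of L(I): finite unions of closed intervals *)
Definition fucl (A : pset) : Prop :=
  exists (n : nat) (f : nat -> cival),
    forall x, A x <-> exists k, (k < n)%N /\ cival_set (f k) x.

Definition scons (A : pset) (rho : env) : env :=
  fun k => match k with O => A | S k' => rho k' end.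
End Defs.

(* first-order formulas (equality is the only relation symbol), de Bruijn variables *)
Inductive fo (Tm : Type) :=
  | FEq of Tm & Tm
  | FNot of fo Tm
  | FAnd of fo Tm & fo Tm
  | FOr of fo Tm & fo Tm
  | FImp of fo Tm & fo Tm
  | FEx of fo Tm
  | FAll of fo Tm.

Inductive Lterm :=
  | LVar of nat | LCup of Lterm & Lterm | LCap of Lterm & Lterm | LBot | LZero
  | LMin of Lterm | LMax of Lterm | LL of Lterm | LR of Lterm.

Inductive Wterm :=
  | WVar of nat | WCup of Wterm & Wterm | WCap of Wterm & Wterm | WBot | WZero
  | WMin of Wterm | WMax of Wterm | WIps of Wterm & Wterm.

Section Sem.
Variables (d : Order.disp_t) (T : orderType d) (z : T).

Fixpoint evalL (rho : env T) (t : Lterm) : pset T :=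
  match t with
  | LVar n => rho n
  | LCup a b => psetU (evalL rho a) (evalL rho b)
  | LCap a b => psetI (evalL rho a) (evalL rho b)
  | LBot => @pset0 _ T
  | LZero => pset1 z
  | LMin a => pmin (evalL rho a)
  | LMax a => pmax (evalL rho a)
  | LL a => lends (evalL rho a)
  | LR a => rends (evalL rho a)
  end.

Fixpoint evalW (rho : env T) (t : Wterm) : pset T :=
  match t with
  | WVar n => rho n
  | WCup a b => psetU (evalW rho a) (evalW rho b)
  | WCap a b => psetI (evalW rho a) (evalW rho b)
  | WBot => @pset0 _ T
  | WZero => pset1 z
  | WMin a => pmin (evalW rho a)
  | WMax a => pmax (evalW rho a)
  | WIps a b => ips (evalW rho a) (evalW rho b)
  end.

Fixpoint sat (Tm : Type) (D : pset T -> Prop) (ev : env T -> Tm -> pset T)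
    (rho : env T) (f : fo Tm) : Prop :=
  match f with
  | FEq a b => forall x, ev rho a x <-> ev rho b x
  | FNot g => ~ sat D ev rho g
  | FAnd g h => sat D ev rho g /\ sat D ev rho h
  | FOr g h => sat D ev rho g \/ sat D ev rho h
  | FImp g h => sat D ev rho g -> sat D ev rho h
  | FEx g => exists A, D A /\ sat D ev (scons A rho) g
  | FAll g => forall A, D A -> sat D ev (scons A rho) g
  end.

Definition satL (rho : env T) (phi : fo Lterm) := sat (@fucl _ T) evalL rho phi.
Definition satW (rho : env T) (psi : fo Wterm) := sat (@finite_pset _ T) evalW rho psi.
End Sem.

(* the variable Y_{2k} of psi receives l(A_k), Y_{2k+1} receives r(A_k) *)
Definition endpoint_env d (T : orderType d) (rho : env T) : env T :=
  fun k => if odd k then rends (rho k./2) else lends (rho k./2).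

From mathcomp Require Import all_boot all_order.
From Stdlib Require Import Classical ClassicalEpsilon FunctionalExtensionality PropExtensionality.
Import Order.TTheory.
Set Implicit Arguments. Unset Strict Implicit. Unset Printing Implicit Defensive.
Local Open Scope order_scope.

(** A finite union A of closed intervals is determined by its endpoint sets: x lies in A
    iff some left endpoint a <= x of A has no right endpoint of A in [a, x). Conversely
    this decoding turns any two finite sets into a finite union of closed intervals, and
    both endpoint sets of such a union are finite (every endpoint is an endpoint of one
    of the intervals; for right endpoints this uses that I has no maximum). So each
    quantifier over L(I) becomes two quantifiers over W(I). Membership of a point in an
    L-term evaluated at decoded sets is W-definable by induction on the term: a point x
    is coded by the singleton {x}, x <= y by min({x} u {y}) = {x}, x in B by
    {x} n B = {x}, and l, r by their first-order definitions. *)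

Lemma seq_ex_max d (T : orderType d) (P : T -> Prop) (s : seq T) x : x \in s -> P x ->
  exists m, [/\ m \in s, P m & forall e, e \in s -> P e -> e <= m].
Proof.
elim: s x => // a s IH x; rewrite inE.
case: (classic (exists2 y, y \in s & P y)) => [[y ys Py] _ _ | noP].
  have [m [ms Pm maxm]] := IH y ys Py.
  case: (classic (P a /\ m <= a)) => [[Pa ma] | not_a].
    exists a; split; rewrite ?mem_head // => e; rewrite inE.
    by case/orP=> [/eqP-> // | es Pe]; apply: le_trans (maxm e es Pe) ma.
  exists m; split; rewrite ?inE ?ms ?orbT // => e; rewrite inE.
  case/orP=> [/eqP-> Pa | ]; last exact: maxm.
  by case: (leP m a) => [ma | /ltW //]; case: not_a.
case/orP=> [/eqP-> Pa | xs Px]; last by case: noP; exists x.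
exists a; split; rewrite ?mem_head // => e; rewrite inE.
by case/orP=> [/eqP-> // | es Pe]; case: noP; exists e.
Qed.

Lemma seq_ex_min d (T : orderType d) (P : T -> Prop) (s : seq T) x : x \in s -> P x ->
  exists m, [/\ m \in s, P m & forall e, e \in s -> P e -> m <= e].
Proof.
move=> xs Px; have [m [ms Pm minm]] := @seq_ex_max _ T^d P s x xs Px.
by exists m; split=> // e es Pe; rewrite -leEdual; apply: minm.
Qed.

Section PointSets.
Variables (d : Order.disp_t) (T : orderType d).

Lemma pset_ext (A B : pset T) : (forall x, A x <-> B x) -> A = B.
Proof.
by move=> AB; apply: functional_extensionality => x; apply: propositional_extensionality.
Qed.

Lemma finite_psetS (A : pset T) (s : seq T) : (forall x, A x -> x \in s) -> finite_pset A.
Proof.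
move=> As; pose inA x := if excluded_middle_informative (A x) then true else false.
exists [seq x <- s | inA x] => x; rewrite mem_filter /inA.
by case: excluded_middle_informative => [Ax|nAx] //=; split=> // _; apply: As.
Qed.

Lemma finite_pset1 (x : T) : finite_pset (pset1 x).
Proof. by exists [:: x] => y; rewrite inE; split=> [->|/eqP]. Qed.

Definition segment_in (A : pset T) (a b : T) := forall w, a <= w <= b -> A w.

Lemma segment_in_cat A a m b : segment_in A a m -> segment_in A m b -> segment_in A a b.
Proof.
move=> Aam Amb w /andP[aw wb].
by case: (leP w m) => wm; [apply: Aam | apply: Amb]; rewrite ?aw ?wb ?(ltW wm).
Qed.

End PointSets.

(** * Endpoints of finite unions of closed intervals *)

Section Endpoints.
Variables (d : Order.disp_t) (T : orderType d) (z : T).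
Hypothesis hz : forall x : T, z <= x.
Hypothesis hnomax : forall x : T, exists y : T, x < y.

(* [(-oo, j] = [z, j]] because [z] is the least element. *)
Definition lo (J : cival T) : T := match J with CI i _ | CRay i => i | CLray _ => z end.
Definition hi (J : cival T) : option T :=
  match J with CI _ j | CLray j => Some j | CRay _ => None end.

Lemma cival_setE J x : cival_set J x <-> lo J <= x /\ forall j, hi J = Some j -> x <= j.
Proof.
case: J => [i j|i|j] /=; split.
- by case/andP=> ix xj; split=> // _ [<-].
- by case=> ix xj; rewrite ix xj.
- by [].
- by case.
- by move=> xj; split=> [|_ [<-]].
- by case=> _; apply.
Qed.

Definition endpoints (n : nat) (f : nat -> cival T) : seq T :=
  [seq lo (f k) | k <- iota 0 n] ++ pmap (fun k => hi (f k)) (iota 0 n).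

Section FiniteUnion.
Variables (A : pset T) (n : nat) (f : nat -> cival T).
Hypothesis HA : forall x, A x <-> exists k, (k < n)%N /\ cival_set (f k) x.

Lemma lo_endpoint k : (k < n)%N -> lo (f k) \in endpoints n f.
Proof. by move=> kn; rewrite mem_cat map_f // mem_iota. Qed.

Lemma hi_endpoint k j : (k < n)%N -> hi (f k) = Some j -> j \in endpoints n f.
Proof.
by move=> kn hk; rewrite mem_cat mem_pmap -hk map_f ?orbT // mem_iota.
Qed.

Lemma fucl_interval x : A x ->
  exists2 k, (k < n)%N & lo (f k) <= x /\ forall j, hi (f k) = Some j -> x <= j.
Proof. by case/HA=> k [kn /cival_setE]; exists k. Qed.

Lemma fucl_mem k x : (k < n)%N ->
  lo (f k) <= x -> (forall j, hi (f k) = Some j -> x <= j) -> A x.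
Proof. by move=> kn lox hix; apply/HA; exists k; split=> //; apply/cival_setE. Qed.

Lemma lends_endpoint x : lends A x -> x \in endpoints n f.
Proof.
case=> Ax not_left; have [k kn [lox hix]] := fucl_interval Ax.
case: (ltP (lo (f k)) x) => [lo_x | x_lo].
  case: not_left; exists (lo (f k)); split=> // w /andP[low wx].
  by apply: fucl_mem kn low _ => j /hix; apply: le_trans wx.
have -> : x = lo (f k) by apply/le_anti; rewrite x_lo lox.
exact: lo_endpoint.
Qed.

Lemma rends_endpoint x : rends A x -> x \in endpoints n f.
Proof.
case=> Ax not_right; have [k kn [lox hix]] := fucl_interval Ax.
case hk: (hi (f k)) => [j|].
  case: (ltP x j) => [xj | jx]; last first.
    have -> : x = j by apply/le_anti; rewrite jx hix.
    exact: hi_endpoint kn hk.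
  case: not_right; exists j; split=> // w /andP[xw wj].
  by apply: fucl_mem kn (le_trans lox xw) _ => j'; rewrite hk => -[<-].
have [y xy] := hnomax x; case: not_right; exists y; split=> // w /andP[xw _].
by apply: fucl_mem kn (le_trans lox xw) _ => j; rewrite hk.
Qed.

Lemma lends_below x : A x -> exists a, [/\ lends A a, a <= x & segment_in A a x].
Proof.
move=> Ax; have xE : x \in x :: endpoints n f by rewrite mem_head.
have [|m [_ [mx Amx] minm]] :=
  seq_ex_min (P := fun e => e <= x /\ segment_in A e x) xE.
  by split=> // w /andP[xw wx]; rewrite (@le_anti _ _ w x) ?xw ?wx.
exists m; split=> //; split; first by apply: Amx; rewrite mx lexx.
case=> y [ym Ayym]; have Ay : A y by apply: Ayym; rewrite lexx (ltW ym).
have [k kn [loy hiy]] := fucl_interval Ay.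
suff: m <= lo (f k) by rewrite leNgt (le_lt_trans loy ym).
apply: minm; first by rewrite inE lo_endpoint ?orbT.
split; first by rewrite (le_trans loy (le_trans (ltW ym) mx)).
apply: segment_in_cat (segment_in_cat _ Ayym) Amx => w /andP[low wy].
by apply: fucl_mem kn low _ => j /hiy; apply: le_trans wy.
Qed.

Lemma rends_between a x : A a -> a <= x -> ~ A x ->
  exists b, [/\ rends A b, a <= b & b < x].
Proof.
move=> Aa ax nAx; have aE : a \in a :: endpoints n f by rewrite mem_head.
have [|m [_ [am [mx Aam]] maxm]] :=
  seq_ex_max (P := fun e => a <= e /\ e < x /\ segment_in A a e) aE.
  split=> //; split.
    by rewrite lt_neqAle ax andbT; apply/eqP => ax'; apply: nAx; rewrite -ax'.
  by move=> w /andP[aw wa]; rewrite (@le_anti _ _ w a) ?aw ?wa.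
exists m; split=> //; split; first by apply: Aam; rewrite am lexx.
case=> y [my Amy]; have Ay : A y by apply: Amy; rewrite lexx (ltW my).
have [k kn [loy hiy]] := fucl_interval Ay.
have [xy | yx] := leP x y; first by apply: nAx; apply: Amy; rewrite (ltW mx) xy.
case hk: (hi (f k)) => [j|]; last first.
  by apply: nAx; apply: fucl_mem kn (le_trans loy (ltW yx)) _ => j; rewrite hk.
have [xj | jx] := leP x j.
  by apply: nAx; apply: fucl_mem kn (le_trans loy (ltW yx)) _ => j'; rewrite hk => -[<-].
suff: j <= m by rewrite leNgt (lt_le_trans my (hiy j hk)).
apply: maxm; first by rewrite inE (hi_endpoint kn hk) orbT.
split; first by rewrite (le_trans am (le_trans (ltW my) (hiy j hk))).
split=> //; apply: segment_in_cat (segment_in_cat Aam Amy) _ => w /andP[yw wj].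
by apply: fucl_mem kn (le_trans loy yw) _ => j'; rewrite hk => -[<-].
Qed.

End FiniteUnion.

Lemma finite_lends (A : pset T) : fucl A -> finite_pset (lends A).
Proof. by case=> n [f HA]; apply: finite_psetS (lends_endpoint HA). Qed.

Lemma finite_rends (A : pset T) : fucl A -> finite_pset (rends A).
Proof. by case=> n [f HA]; apply: finite_psetS (rends_endpoint HA). Qed.

Definition decode (L R : pset T) : pset T :=
  fun x => exists a, [/\ L a, a <= x & forall b, R b -> a <= b -> x <= b].

Lemma decode_ends (A : pset T) : fucl A -> decode (lends A) (rends A) = A.
Proof.
case=> n [f HA]; apply: pset_ext => x; split.
  case=> a [[Aa _] ax right_ends]; apply: NNPP => nAx.
  have [b [Rb ab bx]] := rends_between HA Aa ax nAx.
  by move: (right_ends b Rb ab); rewrite leNgt bx.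
move=> Ax; have [a [La ax Aax]] := lends_below HA Ax.
exists a; split=> // b [_ not_right] ab; rewrite leNgt; apply/negP => bx.
case: not_right; exists x; split=> // w /andP[bw wx].
by apply: Aax; rewrite (le_trans ab bw) wx.
Qed.

Lemma decode_fucl (L R : pset T) : finite_pset L -> finite_pset R -> fucl (decode L R).
Proof.
case=> sL HL [sR HR].
have component a : exists J, forall x,
    a <= x /\ (forall b, R b -> a <= b -> x <= b) <-> cival_set J x.
  case: (classic (exists2 b, R b & a <= b)) => [[b /HR bR ab] | no_b].
    have [m [/HR Rm am minm]] := seq_ex_min (P := fun b => a <= b) bR ab.
    exists (CI a m) => x /=; split=> [[ax xR] | /andP[ax xm]].
      by rewrite ax; apply: xR.
    by split=> // b' /HR b'R ab'; apply: le_trans xm (minm b' b'R ab').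
  exists (CRay a) => x /=; split=> [[] // | ax]; split=> // b Rb ab.
  by case: no_b; exists b.
have [J HJ] := choice _ component.
exists (size sL), (fun k => J (nth z sL k)) => x; split.
  case=> a [/HL/(nthP z)[k kL <-] ax xR].
  by exists k; split=> //; apply/HJ.
case=> k [kL /HJ[ax xR]]; exists (nth z sL k); split=> //.
by apply/HL; apply: mem_nth.
Qed.

Lemma fuclP (A : pset T) :
  fucl A <-> exists L R, [/\ finite_pset L, finite_pset R & A = decode L R].
Proof.
split=> [fA | [L [R [fL fR ->]]]]; last exact: decode_fucl.
exists (lends A), (rends A).
by split; [apply: finite_lends | apply: finite_rends | rewrite decode_ends].
Qed.

Definition decode_env (s : env T) : env T := fun k => decode (s k.*2) (s k.*2.+1).

Lemma decode_env_scons (L R : pset T) (s : env T) :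
  decode_env (scons L (scons R s)) = scons (decode L R) (decode_env s).
Proof. by apply: functional_extensionality => -[|k]. Qed.

Lemma decode_endpoint_env (rho : env T) :
  (forall k, fucl (rho k)) -> decode_env (endpoint_env rho) = rho.
Proof.
move=> fucl_rho; apply: functional_extensionality => k.
by rewrite /decode_env /endpoint_env /= odd_double /= half_double uphalf_double decode_ends.
Qed.

End Endpoints.

(** * Definability in W(I) *)

Fixpoint rename_Wterm (f : nat -> nat) (t : Wterm) : Wterm :=
  match t with
  | WVar n => WVar (f n)
  | WCup a b => WCup (rename_Wterm f a) (rename_Wterm f b)
  | WCap a b => WCap (rename_Wterm f a) (rename_Wterm f b)
  | WBot => WBot
  | WZero => WZero
  | WMin a => WMin (rename_Wterm f a)
  | WMax a => WMax (rename_Wterm f a)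
  | WIps a b => WIps (rename_Wterm f a) (rename_Wterm f b)
  end.

Definition upren (f : nat -> nat) : nat -> nat :=
  fun k => if k is k'.+1 then (f k').+1 else 0.

Fixpoint rename_fo (f : nat -> nat) (p : fo Wterm) : fo Wterm :=
  match p with
  | FEq a b => FEq (rename_Wterm f a) (rename_Wterm f b)
  | FNot g => FNot (rename_fo f g)
  | FAnd g h => FAnd (rename_fo f g) (rename_fo f h)
  | FOr g h => FOr (rename_fo f g) (rename_fo f h)
  | FImp g h => FImp (rename_fo f g) (rename_fo f h)
  | FEx g => FEx (rename_fo (upren f) g)
  | FAll g => FAll (rename_fo (upren f) g)
  end.

Section Definability.
Variables (d : Order.disp_t) (T : orderType d) (z : T).

Lemma evalW_rename f (s : env T) t : evalW z s (rename_Wterm f t) = evalW z (s \o f) t.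
Proof. by elim: t => //= [a -> b ->|a -> b ->|a ->|a ->|a -> b ->]. Qed.

Lemma scons_upren (A : pset T) (s : env T) f : scons A s \o upren f = scons A (s \o f).
Proof. by apply: functional_extensionality => -[|k]. Qed.

Lemma satW_rename p : forall f (s : env T), satW z s (rename_fo f p) <-> satW z (s \o f) p.
Proof.
rewrite /satW; elim: p => [a b|g IH|g IHg h IHh|g IHg h IHh|g IHg h IHh|g IH|g IH] f s /=.
- by rewrite !evalW_rename.
- by rewrite IH.
- by rewrite IHg IHh.
- by rewrite IHg IHh.
- by rewrite IHg IHh.
- by split=> -[A [fA sat_g]]; exists A; move: sat_g; rewrite IH scons_upren.
- by split=> sat_g A fA; move: (sat_g A fA); rewrite IH scons_upren.
Qed.

Definition Wdefinable (P : env T -> Prop) := exists psi, forall s, P s <-> satW z s psi.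

Lemma Wdefinable_ext P Q : Wdefinable P -> (forall s, Q s <-> P s) -> Wdefinable Q.
Proof. by case=> psi HP QP; exists psi => s; rewrite QP. Qed.

Lemma Wdefinable_eq a b : Wdefinable (fun s => forall x, evalW z s a x <-> evalW z s b x).
Proof. by exists (FEq a b). Qed.

Lemma Wdefinable_not P : Wdefinable P -> Wdefinable (fun s => ~ P s).
Proof. by case=> p Hp; exists (FNot p) => s; rewrite /satW /= Hp. Qed.

Lemma Wdefinable_and P Q : Wdefinable P -> Wdefinable Q -> Wdefinable (fun s => P s /\ Q s).
Proof. by case=> p Hp [q Hq]; exists (FAnd p q) => s; rewrite /satW /= Hp Hq. Qed.

Lemma Wdefinable_or P Q : Wdefinable P -> Wdefinable Q -> Wdefinable (fun s => P s \/ Q s).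
Proof. by case=> p Hp [q Hq]; exists (FOr p q) => s; rewrite /satW /= Hp Hq. Qed.

Lemma Wdefinable_imp P Q : Wdefinable P -> Wdefinable Q -> Wdefinable (fun s => P s -> Q s).
Proof. by case=> p Hp [q Hq]; exists (FImp p q) => s; rewrite /satW /= Hp Hq. Qed.

Lemma Wdefinable_iff P Q :
  Wdefinable P -> Wdefinable Q -> Wdefinable (fun s => P s <-> Q s).
Proof.
move=> HP HQ.
apply: (Wdefinable_ext (Wdefinable_and (Wdefinable_imp HP HQ) (Wdefinable_imp HQ HP))).
by move=> s; split=> [[]|[]].
Qed.

Lemma Wdefinable_false : Wdefinable (fun _ => False).
Proof.
apply: (Wdefinable_ext (Wdefinable_not (Wdefinable_eq WBot WBot))) => s.
by split=> // /(_ (fun=> conj id id)).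
Qed.

Lemma Wdefinable_ex P :
  Wdefinable P -> Wdefinable (fun s => exists A, finite_pset A /\ P (scons A s)).
Proof.
case=> p Hp; exists (FEx p) => s; rewrite /satW /=.
by split=> -[A [fA PA]]; exists A; split=> //; apply/Hp.
Qed.

Lemma Wdefinable_all P :
  Wdefinable P -> Wdefinable (fun s => forall A, finite_pset A -> P (scons A s)).
Proof.
case=> p Hp; exists (FAll p) => s; rewrite /satW /=.
by split=> PA A fA; apply/Hp/PA.
Qed.

Lemma Wdefinable_rename P (g : env T -> env T) f :
  (forall s k, g s k = s (f k)) -> Wdefinable P -> Wdefinable (fun s => P (g s)).
Proof.
move=> gE [p Hp]; exists (rename_fo f p) => s.
by rewrite satW_rename -Hp (functional_extensionality _ _ (gE s)).
Qed.

(* [P] read at the innermost bound variable, skipping the [m] variables bound after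
   the environment of [P]. *)
Lemma Wdefinable_drop P m :
  Wdefinable P -> Wdefinable (fun s => P (scons (s 0) (fun k => s (iter m.+1 succn k)))).
Proof.
apply: (Wdefinable_rename (f := fun k => if k is k'.+1 then iter m.+1 succn k' else 0)).
by move=> s [|k].
Qed.

Definition pset_le (A B : pset T) := forall x, pmin (psetU A B) x <-> A x.
Definition pset_sub (A B : pset T) := forall x, psetI A B x <-> A x.
Definition is_pset1 (A : pset T) := exists x, A = pset1 x.

Lemma pset_le1 (x y : T) : pset_le (pset1 x) (pset1 y) <-> x <= y.
Proof.
rewrite /pset_le /pmin /psetU /pset1; split=> [xy | xy w].
  by case: ((xy x).2 erefl) => _; apply; right.
split=> [[[->|->] minw] // | ->]; first by apply/le_anti; rewrite xy minw //; left.
by split=> [|w' [->|->]] //; left.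
Qed.

Lemma pset_sub1 (x : T) (B : pset T) : pset_sub (pset1 x) B <-> B x.
Proof.
rewrite /pset_sub /psetI /pset1; split=> [xB | Bx w]; first by case: ((xB x).2 erefl).
by split=> [[]|->].
Qed.

Lemma Wdefinable_le i j : Wdefinable (fun s => pset_le (s i) (s j)).
Proof. exact: (Wdefinable_eq (WMin (WCup (WVar i) (WVar j))) (WVar i)). Qed.

Lemma Wdefinable_sub i j : Wdefinable (fun s => pset_sub (s i) (s j)).
Proof. exact: (Wdefinable_eq (WCap (WVar i) (WVar j)) (WVar i)). Qed.

Lemma Wdefinable_pset1 i : Wdefinable (fun s => is_pset1 (s i)).
Proof.
apply: (Wdefinable_ext (Wdefinable_and (Wdefinable_not (Wdefinable_eq (WVar i) WBot))
                                       (Wdefinable_eq (WMin (WVar i)) (WVar i)))) => s /=.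
split=> [[x ->] | [nonempty minimal]].
  split=> [/(_ x) [] /(_ erefl) // | y].
  by rewrite /pmin /pset1; split=> [[]|->] //; split=> // _ ->.
have [x sx] : exists x, s i x.
  by apply: NNPP => none; apply: nonempty => y; split=> // sy; apply: none; exists y.
exists x; apply: pset_ext => y; split=> [sy | ->] //.
by apply/le_anti; rewrite ((minimal y).2 sy).2 // ((minimal x).2 sx).2.
Qed.

Lemma Wdefinable_ex_pt P :
  Wdefinable P -> Wdefinable (fun s => exists x, P (scons (pset1 x) s)).
Proof.
move=> HP; apply: (Wdefinable_ext (Wdefinable_ex (Wdefinable_and (Wdefinable_pset1 0) HP))).
move=> s /=; split=> [[x Px] | [_ [_ [[x ->] Px]]]]; last by exists x.
by exists (pset1 x); split; [apply: finite_pset1 | split=> //; exists x].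
Qed.

Lemma Wdefinable_all_pt P :
  Wdefinable P -> Wdefinable (fun s => forall x, P (scons (pset1 x) s)).
Proof.
move=> HP; apply: (Wdefinable_ext (Wdefinable_all (Wdefinable_imp (Wdefinable_pset1 0) HP))).
move=> s /=; split=> [Px A _ [x ->] | Px x]; first exact: Px.
by apply: Px; [apply: finite_pset1 | exists x].
Qed.

End Definability.

(** * Translation of L-formulas *)

Section Translation.
Variables (d : Order.disp_t) (T : orderType d) (z : T).

(* The point [x] is passed to the defining W-formula as [{x}] in variable 0. *)
Definition Wdefinable_pt (Q : env T -> pset T) :=
  exists2 P, Wdefinable z P & forall s x, P (scons (pset1 x) s) <-> Q s x.

Lemma Wdefinable_pt_decode n : Wdefinable_pt (fun s => decode_env s n).
Proof.
eexists.
  apply: (Wdefinable_ex_pt (Wdefinable_and (Wdefinable_sub z 0 n.*2.+2)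
           (Wdefinable_and (Wdefinable_le z 0 1)
              (Wdefinable_all_pt (Wdefinable_imp (Wdefinable_sub z 0 n.*2.+4)
                 (Wdefinable_imp (Wdefinable_le z 1 0) (Wdefinable_le z 2 0))))))).
move=> s x /=; split.
  case=> a [/pset_sub1 La [/pset_le1 ax xR]]; exists a; split=> // b Rb ab.
  by apply/pset_le1/xR; [apply/pset_sub1 | apply/pset_le1].
case=> a [La ax xR]; exists a; split; first exact/pset_sub1.
split; first exact/pset_le1.
by move=> b /pset_sub1 Rb /pset_le1 ab; apply/pset_le1/xR.
Qed.

Lemma Wdefinable_pt_cup Q1 Q2 : Wdefinable_pt Q1 -> Wdefinable_pt Q2 ->
  Wdefinable_pt (fun s => psetU (Q1 s) (Q2 s)).
Proof.
case=> P1 HP1 PQ1 [P2 HP2 PQ2]; exists (fun s => P1 s \/ P2 s); first exact: Wdefinable_or.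
by move=> s x; rewrite /psetU PQ1 PQ2.
Qed.

Lemma Wdefinable_pt_cap Q1 Q2 : Wdefinable_pt Q1 -> Wdefinable_pt Q2 ->
  Wdefinable_pt (fun s => psetI (Q1 s) (Q2 s)).
Proof.
case=> P1 HP1 PQ1 [P2 HP2 PQ2]; exists (fun s => P1 s /\ P2 s); first exact: Wdefinable_and.
by move=> s x; rewrite /psetI PQ1 PQ2.
Qed.

Lemma Wdefinable_pt0 : Wdefinable_pt (fun _ => @pset0 _ T).
Proof. by exists (fun _ => False); first exact: Wdefinable_false. Qed.

Lemma Wdefinable_pt_zero : Wdefinable_pt (fun _ => pset1 z).
Proof.
exists (fun s => forall x, s 0 x <-> pset1 z x); first exact: (Wdefinable_eq z (WVar 0) WZero).
by move=> s x /=; split=> [/(_ x) [] /(_ erefl) | -> y].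
Qed.

Lemma Wdefinable_pt_min Q : Wdefinable_pt Q -> Wdefinable_pt (fun s => pmin (Q s)).
Proof.
case=> P HP PQ; eexists.
  exact: (Wdefinable_and HP (Wdefinable_all_pt
            (Wdefinable_imp (Wdefinable_drop 1 HP) (Wdefinable_le z 1 0)))).
move=> s x /=; rewrite PQ; split=> -[Qx minx]; split=> // y.
  by move=> Qy; apply/pset_le1/minx; rewrite PQ.
by rewrite PQ => Qy; apply/pset_le1/minx.
Qed.

Lemma Wdefinable_pt_max Q : Wdefinable_pt Q -> Wdefinable_pt (fun s => pmax (Q s)).
Proof.
case=> P HP PQ; eexists.
  exact: (Wdefinable_and HP (Wdefinable_all_pt
            (Wdefinable_imp (Wdefinable_drop 1 HP) (Wdefinable_le z 0 1)))).
move=> s x /=; rewrite PQ; split=> -[Qx maxx]; split=> // y.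
  by move=> Qy; apply/pset_le1/maxx; rewrite PQ.
by rewrite PQ => Qy; apply/pset_le1/maxx.
Qed.

Lemma Wdefinable_pt_lends Q : Wdefinable_pt Q -> Wdefinable_pt (fun s => lends (Q s)).
Proof.
case=> P HP PQ; eexists.
  exact: (Wdefinable_and HP (Wdefinable_not (Wdefinable_ex_pt
            (Wdefinable_and (Wdefinable_not (Wdefinable_le z 1 0)) (Wdefinable_all_pt
               (Wdefinable_imp (Wdefinable_and (Wdefinable_le z 1 0) (Wdefinable_le z 0 2))
                  (Wdefinable_drop 2 HP))))))).
move=> s x /=; rewrite PQ; split=> -[Qx not_left]; split=> // -[y [yx Qyx]].
  apply: not_left; exists y; split; first by move/pset_le1; rewrite leNgt yx.
  by move=> w [/pset_le1 yw /pset_le1 wx]; rewrite PQ; apply: Qyx; rewrite yw wx.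
apply: not_left; exists y; split; first by rewrite ltNge; apply/negP => /pset_le1.
by move=> w /andP[yw wx]; rewrite -PQ; apply: Qyx; split; apply/pset_le1.
Qed.

Lemma Wdefinable_pt_rends Q : Wdefinable_pt Q -> Wdefinable_pt (fun s => rends (Q s)).
Proof.
case=> P HP PQ; eexists.
  exact: (Wdefinable_and HP (Wdefinable_not (Wdefinable_ex_pt
            (Wdefinable_and (Wdefinable_not (Wdefinable_le z 0 1)) (Wdefinable_all_pt
               (Wdefinable_imp (Wdefinable_and (Wdefinable_le z 2 0) (Wdefinable_le z 0 1))
                  (Wdefinable_drop 2 HP))))))).
move=> s x /=; rewrite PQ; split=> -[Qx not_right]; split=> // -[y [xy Qxy]].
  apply: not_right; exists y; split; first by move/pset_le1; rewrite leNgt xy.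
  by move=> w [/pset_le1 xw /pset_le1 wy]; rewrite PQ; apply: Qxy; rewrite xw wy.
apply: not_right; exists y; split; first by rewrite ltNge; apply/negP => /pset_le1.
by move=> w /andP[xw wy]; rewrite -PQ; apply: Qxy; split; apply/pset_le1.
Qed.

Lemma evalL_Wdefinable_pt t : Wdefinable_pt (fun s => evalL z (decode_env s) t).
Proof.
elim: t => [n|a IHa b IHb|a IHa b IHb| | |a IHa|a IHa|a IHa|a IHa] /=.
- exact: Wdefinable_pt_decode.
- exact: Wdefinable_pt_cup.
- exact: Wdefinable_pt_cap.
- exact: Wdefinable_pt0.
- exact: Wdefinable_pt_zero.
- exact: Wdefinable_pt_min.
- exact: Wdefinable_pt_max.
- exact: Wdefinable_pt_lends.
- exact: Wdefinable_pt_rends.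
Qed.

Hypothesis hz : forall x : T, z <= x.
Hypothesis hnomax : forall x : T, exists y : T, x < y.

Lemma satL_Wdefinable phi : Wdefinable z (fun s => satL z (decode_env s) phi).
Proof.
elim: phi => [a b|g IH|g IHg h IHh|g IHg h IHh|g IHg h IHh|g IH|g IH].
- have [Pa HPa PQa] := evalL_Wdefinable_pt a; have [Pb HPb PQb] := evalL_Wdefinable_pt b.
  apply: (Wdefinable_ext (Wdefinable_all_pt (Wdefinable_iff HPa HPb))) => s.
  by split=> ab x; move: (ab x); rewrite PQa PQb.
- exact: Wdefinable_not.
- exact: Wdefinable_and.
- exact: Wdefinable_or.
- exact: Wdefinable_imp.
- apply: (Wdefinable_ext (Wdefinable_ex (Wdefinable_ex IH))) => s; split.
    case=> A [/(fuclP hz hnomax) [L [R [fL fR ->]]] sat_g].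
    by exists R; split=> //; exists L; rewrite decode_env_scons.
  case=> R [fR [L [fL sat_g]]]; exists (decode L R); rewrite -decode_env_scons.
  by split=> //; apply/(fuclP hz hnomax); exists L, R.
- apply: (Wdefinable_ext (Wdefinable_all (Wdefinable_all IH))) => s; split.
    move=> sat_g R fR L fL; rewrite decode_env_scons.
    by apply: sat_g; apply/(fuclP hz hnomax); exists L, R.
  move=> sat_g A /(fuclP hz hnomax) [L [R [fL fR ->]]].
  by rewrite -decode_env_scons; apply: sat_g.
Qed.

End Translation.

Theorem corollary6p5 (d : Order.disp_t) (T : orderType d) (z : T)
  (hz : forall x : T, (z <= x)%O)
  (hdense : forall x y : T, (x < y)%O -> exists w : T, (x < w)%O /\ (w < y)%O)
  (hnomax : forall x : T, exists y : T, (x < y)%O)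
  (phi : fo Lterm) :
  exists psi : fo Wterm,
    forall rho : env T, (forall k, fucl (rho k)) ->
      (satL z rho phi <-> satW z (endpoint_env rho) psi).
Proof.
have [psi Hpsi] := satL_Wdefinable hz hnomax phi.
by exists psi => rho fucl_rho; rewrite -Hpsi (decode_endpoint_env hz).
Qed.
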